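(* Let $S\subseteq X$, let $\psi:S\to Z$ be $C$-convex, $x_0\in S$, and let $f=\psi^C$. Assume $C$ is polyhedral and that for every $x\in X$ and every $z^*\in C^-\setminus\{0\}$ the function $t\mapsto\varphi_{f,z^*}(x_0+t(x-x_0))$ (for $t\in[0,1]$, $+\infty$ otherwise) is lower semicontinuous at $t=0$. Then $x_0$ solves the set-valued Minty inequality for $f$, i.e. for all $x\in X$ with $f(x)\ne f(x_0)$ one has $f'(x,x_0-x)\not\subseteq 0^+f(x)$, if and only if $\psi(x_0)\in\operatorname{Eff}\psi[S]$.
   Context: $X$ is a real linear space, $Z$ a real locally convex Hausdorff space with dual $Z^*$, $C\subseteq Z$ a closed convex cone with $0\in C$ and $C^-=\{z^*\in Z^*: z^*(c)\le0\ \forall c\in C\}$, $C^-\setminus\{0\}\ne\emptyset$. $C$ is polyhedral if $C=\bigcap_{i=1}^n\{z: 0\le -m_i^*(z)\}$ for finitely many $m_i^*\in Z^*$. $\psi:S\to Z$ is $C$-convex if $S$ is convex and $(1-t)\psi(x_1)+t\psi(x_2)\in\psi(x_1+t(x_2-x_1))+C$ for all $x_1,x_2\in S$, $t\in(0,1)$. $f=\psi^C:X\to 2^Z$ is $f(x)=\psi(x)+C$ for $x\in S$ and $f(x)=\emptyset$ otherwise. $\psi(x_0)\in\operatorname{Eff}\psi[S]$ means: for all $y\in\psi[S]$, $\psi(x_0)\in y+C$ implies $\psi(x_0)\in y+(C\cap -C)$. For $A,B\subseteq Z$: $A\ominus B=\{z: B+\{z\}\subseteq A\}$; $0^+A=\{z:A+\{z\}\subseteq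 A\}$ for $A\neq\emptyset$, $0^+\emptyset=\emptyset$. $f'(x,u)=\bigcap_{t_0>0}\operatorname{cl}\operatorname{co}\bigcup_{0<t<t_0}\frac1t\big(f(x+tu)\ominus f(x)\big)$. $\varphi_{f,z^*}(x)=\inf\{-z^*(z): z\in f(x)\}$, i.e. $-z^*(\psi(x))$ on $S$ and $+\infty$ outside $S$. *)

From HB Require Import structures.
From mathcomp Require Import all_boot all_order all_algebra.
From mathcomp Require Import all_classical all_reals all_analysis.
Set Implicit Arguments. Unset Strict Implicit. Unset Printing Implicit Defensive.
Import Order.TTheory GRing.Theory Num.Theory numFieldTopology.Exports numFieldNormedType.Exports.
Local Open Scope classical_set_scope.
Local Open Scope ring_scope.

Section Defs.
Context {R : realType}.

Definition is_dual_elem (Z : tvsType R) (zs : Z -> R) : Prop :=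
  (forall (a : R) (x y : Z), zs (a *: x + y) = a * zs x + zs y) /\ continuous zs.

Definition neg_polar (Z : tvsType R) (C : set Z) : set (Z -> R) :=
  [set zs | is_dual_elem zs /\ forall c, C c -> zs c <= 0].

Definition is_cone (Z : lmodType R) (C : set Z) : Prop :=
  forall (c : Z) (t : R), C c -> 0 < t -> C (t *: c).

Definition polyhedral (Z : tvsType R) (C : set Z) : Prop :=
  exists (n : nat) (m : 'I_n -> Z -> R),
    (forall i, is_dual_elem (m i)) /\
    C = [set z | forall i, 0 <= - m i z].

Definition translate (Z : lmodType R) (z : Z) (A : set Z) : set Z :=
  [set z + a | a in A].

Definition C_convex (X Z : lmodType R) (C : set Z) (S : set X) (psi : X -> Z)
  : Prop :=
  convex_set (S : set (convex_lmodType X)) /\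
  forall (x1 x2 : X) (t : R), S x1 -> S x2 -> 0 < t -> t < 1 ->
    translate (psi (x1 + t *: (x2 - x1))) C ((1 - t) *: psi x1 + t *: psi x2).

Definition psiC (X Z : lmodType R) (C : set Z) (S : set X) (psi : X -> Z)
  (x : X) : set Z :=
  [set z | S x /\ translate (psi x) C z].

Definition in_Eff (X Z : lmodType R) (C : set Z) (S : set X) (psi : X -> Z)
  (z0 : Z) : Prop :=
  forall y, (psi @` S) y -> translate y C z0 ->
    translate y (C `&` [set - c | c in C]) z0.

Definition ominus (Z : lmodType R) (A B : set Z) : set Z :=
  [set z | forall b, B b -> A (b + z)].

(* recession cone 0^+ A, with 0^+ emptyset = emptyset *)
Definition recession (Z : lmodType R) (A : set Z) : set Z :=
  [set z | A !=set0 /\ forall a, A a -> A (a + z)].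

Definition scale_set (Z : lmodType R) (s : R) (A : set Z) : set Z :=
  [set s *: a | a in A].

Definition conv_hull (Z : lmodType R) (A : set Z) : set Z :=
  \bigcap_(B in [set B : set Z | convex_set (B : set (convex_lmodType Z)) /\ A `<=` B]) B.

Definition setdir_deriv (X : lmodType R) (Z : tvsType R) (f : X -> set Z)
  (x u : X) : set Z :=
  \bigcap_(t0 in [set t0 : R | 0 < t0])
    closure (conv_hull (\bigcup_(t in [set t : R | 0 < t < t0])
                          scale_set t^-1 (ominus (f (x + t *: u)) (f x)))).

Definition phi_fz (X Z : lmodType R) (f : X -> set Z) (zs : Z -> R) (x : X)
  : \bar R :=
  ereal_inf [set (- zs z)%:E | z in f x].

Definition lsc_at (T : topologicalType) (g : T -> \bar R) (t : T) : Prop :=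
  forall a : R, (a%:E < g t)%E ->
    exists2 V, nbhs t V & forall y, V y -> (a%:E < g y)%E.

Definition minty_sol (X : lmodType R) (Z : tvsType R) (f : X -> set Z)
  (x0 : X) : Prop :=
  forall x : X, f x <> f x0 ->
    ~ (setdir_deriv f x (x0 - x) `<=` recession (f x)).

End Defs.

From HB Require Import structures.
From mathcomp Require Import all_boot all_order all_algebra.
From mathcomp Require Import all_classical all_reals all_analysis.
From mathcomp Require Import ring lra.
Import Order.TTheory GRing.Theory Num.Theory numFieldTopology.Exports numFieldNormedType.Exports.
Local Open Scope classical_set_scope.
Local Open Scope ring_scope.
Set Implicit Arguments. Unset Strict Implicit.

(* If psi x0 is efficient and f x <> f x0, C-convexity puts psi x0 - psi x in
   f'(x, x0 - x); were that derivative inside 0^+ f(x) = C, then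
   psi x0 \in psi x + C and efficiency would force f x = f x0.
   Conversely, let psi x0 = psi x + c with c \in C, -c \notin C, and write
   C = {z | forall i, m_i z <= 0}.  Each h_i(s) = - m_i (psi (x0 + s (x - x0)))
   is convex on [0, 1] with h_i 1 <= h_i 0, strictly for some i.  Since a convex
   function that increases somewhere keeps increasing, lower semicontinuity at
   0 makes every h_i nonincreasing near 0.  For y = x0 + s (x - x0) with s small,
   psi therefore decreases w.r.t. C along [y, x0], so f'(y, x0 - y) lies in
   C = 0^+ f(y) although f y <> f x0, contradicting the Minty property. *)

Section DualElement.
Context {R : realType} {Z : tvsType R} (zs : Z -> R).
Hypothesis zs_dual : is_dual_elem zs.

Lemma dual_elemD a b : zs (a + b) = zs a + zs b.
Proof. by rewrite -[a in LHS]scale1r zs_dual.1 mul1r. Qed.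

Lemma dual_elem0 : zs 0 = 0.
Proof. by have := dual_elemD 0 0; rewrite addr0; lra. Qed.

Lemma dual_elemZ k a : zs (k *: a) = k * zs a.
Proof. by rewrite -[k *: a]addr0 zs_dual.1 dual_elem0 addr0. Qed.

Lemma dual_elemN a : zs (- a) = - zs a.
Proof. by rewrite -scaleN1r dual_elemZ mulN1r. Qed.

End DualElement.

Section ConvexSets.
Context {R : realType} {X : lmodType R}.

Lemma convex_set_segment (S : set X) :
  convex_set (S : set (convex_lmodType X)) ->
  forall a b (t : R), S a -> S b -> 0 <= t <= 1 -> S (a + t *: (b - a)).
Proof.
move=> cS a b t Sa Sb /andP[t0 t1].
have := cS b a (Itv01 t0 t1); rewrite !inE => /(_ Sb Sa).
by congr S; rewrite /conv /= scalerBr scalerBl scale1r addrC [_ *: b - _]addrC addrA.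
Qed.

Lemma convex_cone_addr_closed (C : set X) :
  convex_set (C : set (convex_lmodType X)) -> is_cone C ->
  forall a b, C a -> C b -> C (a + b).
Proof.
move=> Ccvx Ccone a b Ca Cb.
have h0 : (0 : R) <= 2^-1 by rewrite invr_ge0 ler0n.
have h1 : (2^-1 : R) <= 1 by rewrite invf_le1 // ?ler1n // ltr0n.
have := Ccvx a b (Itv01 h0 h1); rewrite !inE => /(_ Ca Cb) /(Ccone _ 2)/(_ (ltr0n _ 2)).
congr C; rewrite /conv /= scalerDr !scalerA.
have -> : (2 * unstable.onem 2^-1 : R) = 1 by rewrite /unstable.onem; field.
by rewrite divff ?pnatr_eq0 // !scale1r.
Qed.

Definition segment (x0 x : X) (s : R) : X := x0 + s *: (x - x0).

Lemma segment0 x0 x : segment x0 x 0 = x0.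
Proof. by rewrite /segment scale0r addr0. Qed.

Lemma segment1 x0 x : segment x0 x 1 = x.
Proof. by rewrite /segment scale1r addrC subrK. Qed.

Lemma segment_comb x0 x a b t :
  segment x0 x a + t *: (segment x0 x b - segment x0 x a) =
  segment x0 x ((1 - t) * a + t * b).
Proof.
rewrite /segment opprD addrACA subrr add0r -scalerBl scalerA -addrA -scalerDl.
by congr (_ + _ *: _); ring.
Qed.

Lemma segment_toward_start x0 x s t :
  segment x0 x s + t *: (x0 - segment x0 x s) = segment x0 x (s - t * s).
Proof.
by rewrite /segment opprD addNKr scalerN scalerA -addrA -scalerBl.
Qed.

End ConvexSets.

Section ConvexOnUnitInterval.
Context {R : realType} (h : R -> R).
Hypothesis h_convex : forall a b t, 0 <= a <= 1 -> 0 <= b <= 1 -> 0 < t < 1 ->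
  h ((1 - t) * a + t * b) <= (1 - t) * h a + t * h b.

Lemma convex_increase_propagates p q u :
  0 <= p -> p < q -> q < u -> u <= 1 -> h p < h q -> h q < h u.
Proof.
move=> p0 pq qu u1 hpq; rewrite ltNge; apply/negP => huq.
pose t := (q - p) / (u - p).
have t0 : 0 < t by rewrite divr_gt0 // subr_gt0 // (lt_trans pq qu).
have t1 : t < 1 by rewrite ltr_pdivrMr ?mul1r; lra.
have tq : (1 - t) * p + t * u = q by rewrite /t; field; lra.
have := h_convex (a := p) (b := u) (t := t) ltac:(lra) ltac:(lra) ltac:(lra).
rewrite tq.
have : (1 - t) * h p < (1 - t) * h q by rewrite ltr_pM2l // subr_gt0.
have : t * h u <= t * h q by rewrite ler_pM2l.
lra.
Qed.

Lemma convex_nonincreasing_near0 :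
  h 1 <= h 0 -> (forall a, a < h 0 -> \forall s \near 0^'+, a < h s) ->
  \forall s \near 0^'+, forall s', 0 < s' -> s' < s -> h s <= h s'.
Proof.
move=> h10 h_lsc.
(* An increase on [p, q] propagates to h p < h 1 <= h 0, while lower
   semicontinuity keeps h above h p just right of 0. *)
have [[p [q [p0 pq q1 hpq]]]|no_increase] :=
  pselect (exists p q, [/\ 0 < p, p < q, q < 1 & h p < h q]).
- have hp0 : h p < h 0.
    by have := convex_increase_propagates (ltW p0) pq q1 (lexx _) hpq; lra.
  apply: filterS2 (nbhs_right_lt p0) (h_lsc _ hp0) => s sp hps s' s'0 s's.
  rewrite leNgt; apply/negP => hs's.
  by have := convex_increase_propagates (ltW s'0) s's sp (ltW (lt_trans pq q1)) hs's; lra.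
- apply: filterS (nbhs_right_lt ltr01) => s s1 s' s'0 s's.
  by rewrite leNgt; apply/negP => hs's; apply: no_increase; exists s', s.
Qed.

End ConvexOnUnitInterval.

Section PsiC.
Context {R : realType} {X Z : lmodType R} (C : set Z) (S : set X) (psi : X -> Z).
Hypotheses (Ccvx : convex_set (C : set (convex_lmodType Z))) (Ccone : is_cone C)
  (C0 : C 0).
Local Notation f := (psiC C S psi).
Let C_add := convex_cone_addr_closed Ccvx Ccone.

Lemma psiC_psi y : S y -> f y (psi y).
Proof. by move=> Sy; split => //; exists 0 => //; rewrite addr0. Qed.

Lemma recession_psiC y : S y -> recession (f y) = C.
Proof.
move=> Sy; apply/seteqP; split => z.
- move=> [_ /(_ _ (psiC_psi Sy)) [_ [c Cc /addrI <-]]] //.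
- move=> Cz; split; first by exists (psi y); exact: psiC_psi.
  move=> _ [_ [c Cc <-]]; split => //; exists (c + z); first exact: C_add.
  by rewrite addrA.
Qed.

Lemma psiC_translate y y' : S y -> f y = f y' -> translate (psi y') C (psi y).
Proof. by move=> Sy fyy'; have := psiC_psi Sy; rewrite fyy' => -[]. Qed.

Lemma psiC_eq x y : S x -> S y ->
  translate (psi x) (C `&` [set - c | c in C]) (psi y) -> f x = f y.
Proof.
move=> Sx Sy [a [Ca [c' Cc' ac']] psiy].
apply/seteqP; split => z [_ [c Cc <-]]; split => //.
- exists (c' + c); first exact: C_add.
  by rewrite -psiy -ac' -addrA addKr.
- by exists (a + c); [exact: C_add | rewrite addrA psiy].
Qed.

Lemma ominus_psiC_sub x y : S x -> S y -> C (psi y - psi x) ->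
  ominus (f y) (f x) `<=` C.
Proof.
move=> Sx Sy Cyx a /(_ _ (psiC_psi Sx)) [_ [c Cc psixa]].
have -> : a = (psi y - psi x) + c by rewrite addrAC psixa addrC addKr.
exact: C_add.
Qed.

Lemma C_convex_ominus x x' t : C_convex C S psi -> S x -> S x' -> 0 < t < 1 ->
  ominus (f (x + t *: (x' - x))) (f x) (t *: (psi x' - psi x)).
Proof.
move=> [cS psi_cvx] Sx Sx' /andP[t0 t1] _ [_ [c Cc <-]].
split; first by apply: convex_set_segment => //; rewrite (ltW t0) (ltW t1).
have [c' Cc' comb] := psi_cvx x x' t Sx Sx' t0 t1.
exists (c' + c); first exact: C_add.
rewrite addrA comb scalerBr scalerBl scale1r.
by rewrite -[RHS]addrA [c + _]addrC !addrA [psi x - _ + _]addrAC.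
Qed.

End PsiC.

Section SetDirectionalDerivative.
Context {R : realType} {X : lmodType R} {Z : tvsType R} (f : X -> set Z).

Lemma setdir_deriv_of_quotients x u z :
  (forall t0, 0 < t0 -> exists2 t, 0 < t < t0 & ominus (f (x + t *: u)) (f x) (t *: z)) ->
  setdir_deriv f x u z.
Proof.
move=> quot t0 t00; have [t /andP[t0' tt0] Hz] := quot t0 t00.
apply: subset_closure => B [_]; apply; exists t; first by rewrite /= t0'.
by exists (t *: z) => //; rewrite scalerA mulVf ?scale1r // gt_eqF.
Qed.

Lemma setdir_deriv_sub_cone x u (K : set Z) t0 :
  closed K -> convex_set (K : set (convex_lmodType Z)) -> is_cone K -> 0 < t0 ->
  (forall t, 0 < t < t0 -> ominus (f (x + t *: u)) (f x) `<=` K) ->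
  setdir_deriv f x u `<=` K.
Proof.
move=> Kcl Kcvx Kcone t00 quotK z /(_ t0 t00) Hz.
rewrite ((closure_id K).1 Kcl); apply: closure_subset Hz => w; apply; split => //.
move=> _ [t /= /andP[t0' tt0] [a Ha <-]].
by apply: Kcone; [apply: quotK Ha; rewrite t0' | rewrite invr_gt0].
Qed.

End SetDirectionalDerivative.

Lemma exists_pos_lt (R : realType) (t0 : R) : 0 < t0 -> exists2 t, 0 < t < t0 & t < 1.
Proof.
move=> t00; have m0 : 0 < Num.min t0 1 by rewrite lt_min t00 ltr01.
have mt0 : Num.min t0 1 <= t0 by rewrite ge_min lexx.
have m1 : Num.min t0 1 <= 1 by rewrite ge_min lexx orbT.
by exists (Num.min t0 1 / 2); lra.
Qed.

Section MintyEfficiency.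
Context {R : realType} {X : lmodType R} {Z : tvsType R}
  (C : set Z) (S : set X) (psi : X -> Z).
Hypotheses (Ccvx : convex_set (C : set (convex_lmodType Z))) (Ccone : is_cone C)
  (C0 : C 0) (psi_cvx : C_convex C S psi).
Local Notation f := (psiC C S psi).
Local Notation phi_fz_segment zs x0 x := (fun t : R =>
  if (0 <= t) && (t <= 1) then phi_fz f zs (x0 + t *: (x - x0)) else +oo%E).

Lemma in_Eff_minty_sol x0 : S x0 -> in_Eff C S psi (psi x0) -> minty_sol f x0.
Proof.
move=> Sx0 Eff x fx_ne deriv_sub.
have [Sx|nSx] := pselect (S x); last first.
  have : setdir_deriv f x (x0 - x) 0.
    apply: setdir_deriv_of_quotients => t0 t00.
    by have [t t_pos _] := exists_pos_lt t00; exists t => // b [].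
  by move/deriv_sub => [[b [/nSx]]].
have Cd : C (psi x0 - psi x).
  rewrite -(recession_psiC psi Ccvx Ccone C0 Sx); apply: deriv_sub.
  apply: setdir_deriv_of_quotients => t0 t00.
  have [t /andP[t0' tt0] t1] := exists_pos_lt t00.
  by exists t; rewrite ?t0' //; apply: C_convex_ominus; rewrite ?t0'.
apply: fx_ne; apply: psiC_eq => //; apply: Eff; first by exists x.
by exists (psi x0 - psi x) => //; rewrite addrC subrK.
Qed.

Lemma phi_fz_psiC zs y : neg_polar C zs -> S y ->
  phi_fz f zs y = (- zs (psi y))%:E.
Proof.
move=> [zs_dual zsC] Sy; apply/le_anti/andP; split.
  by apply: ereal_inf_lbound; exists (psi y) => //; exact: psiC_psi.
apply: le_ereal_inf_tmp => _ [z [_ [c Cc <-]] <-].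
by rewrite lee_fin (dual_elemD zs_dual) opprD lerDl oppr_ge0 zsC.
Qed.

Lemma neg_polar_segment_convex zs x0 x : neg_polar C zs -> S x0 -> S x ->
  forall a b t, 0 <= a <= 1 -> 0 <= b <= 1 -> 0 < t < 1 ->
  - zs (psi (segment x0 x ((1 - t) * a + t * b))) <=
  (1 - t) * - zs (psi (segment x0 x a)) + t * - zs (psi (segment x0 x b)).
Proof.
move=> [zs_dual zsC] Sx0 Sx a b t a01 b01 /andP[t0 t1].
have Sseg := convex_set_segment psi_cvx.1 Sx0 Sx.
have [c Cc comb] := psi_cvx.2 _ _ t (Sseg a a01) (Sseg b b01) t0 t1.
move: comb; rewrite segment_comb => /(congr1 zs).
rewrite !(dual_elemD zs_dual) !(dual_elemZ zs_dual); have := zsC c Cc; nra.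
Qed.

Lemma neg_polar_segment_lsc zs x0 x : neg_polar C zs -> S x0 -> S x ->
  lsc_at (phi_fz_segment zs x0 x) 0 ->
  forall a, a < - zs (psi (segment x0 x 0)) ->
  \forall s \near 0^'+, a < - zs (psi (segment x0 x s)).
Proof.
move=> zsC Sx0 Sx lsc a ha.
have Sseg := convex_set_segment psi_cvx.1 Sx0 Sx.
have [|V V0 aV] := lsc a.
  by rewrite lexx ler01 phi_fz_psiC ?lte_fin //; apply: Sseg; rewrite lexx ler01.
apply: filterS3 (nbhs_right_gt 0) (nbhs_right_lt ltr01) (cvg_within _ V0).
move=> s s0 s1 Vs; have s01 : 0 <= s <= 1 by rewrite !ltW.
by have := aV s Vs; rewrite s01 phi_fz_psiC //; exact: Sseg.
Qed.

Lemma neg_polar_segment_nonincreasing zs x0 x c : neg_polar C zs ->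
  S x0 -> S x -> C c -> psi x + c = psi x0 ->
  lsc_at (phi_fz_segment zs x0 x) 0 ->
  \forall s \near 0^'+, forall s', 0 < s' -> s' < s ->
    - zs (psi (segment x0 x s)) <= - zs (psi (segment x0 x s')).
Proof.
move=> zsC Sx0 Sx Cc psix0 lsc.
apply: convex_nonincreasing_near0 (neg_polar_segment_convex zsC Sx0 Sx) _
  (neg_polar_segment_lsc zsC Sx0 Sx lsc).
rewrite segment0 segment1 -psix0 (dual_elemD zsC.1) opprD lerDl oppr_ge0.
exact: zsC.2.
Qed.

Lemma psiC_segment_neq zs x0 x c s : neg_polar C zs ->
  S x0 -> S x -> C c -> psi x + c = psi x0 -> zs c < 0 -> 0 < s < 1 ->
  f (segment x0 x s) <> f x0.
Proof.
move=> zsC Sx0 Sx Cc psix0 zsc s01.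
have Ss : S (segment x0 x s) by apply: (convex_set_segment psi_cvx.1) => //; lra.
move/(psiC_translate C0 Ss) => [c' Cc' psis].
have := neg_polar_segment_convex zsC Sx0 Sx (a := 0) (b := 1) (t := s).
rewrite mulr0 add0r mulr1 segment0 segment1 -psis -psix0 => /(_ _ _ s01).
rewrite !(dual_elemD zsC.1); have := zsC.2 c' Cc'; nra.
Qed.

Lemma minty_sol_segment_descent x0 y : closed C -> S y -> minty_sol f x0 ->
  (forall t, 0 < t < 1 ->
     S (y + t *: (x0 - y)) /\ C (psi (y + t *: (x0 - y)) - psi y)) ->
  f y = f x0.
Proof.
move=> Ccl Sy minty descent; apply: contrapT => fy_ne; apply: (minty _ fy_ne).
rewrite recession_psiC //; apply: (setdir_deriv_sub_cone Ccl Ccvx Ccone ltr01).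
by move=> t /descent[Syt Cyt]; apply: ominus_psiC_sub.
Qed.

Lemma minty_sol_in_Eff x0 : S x0 -> closed C -> polyhedral C ->
  (forall (x : X) (zs : Z -> R), neg_polar C zs -> zs <> (fun _ => 0) ->
     lsc_at (phi_fz_segment zs x0 x) 0) ->
  minty_sol f x0 -> in_Eff C S psi (psi x0).
Proof.
move=> Sx0 Ccl [n [m [m_dual Ceq]]] hlsc minty _ [x Sx <-] [c Cc psix0].
exists c => //; split => //.
have [Cnc|nCnc] := pselect (C (- c)); first by exists (- c); rewrite ?opprK.
exfalso.
have m_polar i : neg_polar C (m i).
  by split => // z; rewrite Ceq => /(_ i); rewrite oppr_ge0.
have [j mjc] : exists j, m j c < 0.
  move: nCnc; rewrite Ceq => /existsNP[j /negP].
  by rewrite -ltNge (dual_elemN (m_dual j)) opprK; exists j.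
have near_nonincr : \forall s \near 0^'+, forall i s', 0 < s' -> s' < s ->
    - m i (psi (segment x0 x s)) <= - m i (psi (segment x0 x s')).
  apply: filter_forall => i; have [mi0|mi0] := pselect (m i = fun _ => 0).
    by apply: nearW => s s' _ _; rewrite mi0.
  exact: neg_polar_segment_nonincreasing Sx0 Sx Cc psix0 (hlsc x _ (m_polar i) mi0).
have [s [[s0 s1] nonincr]] := filter_ex
  (filterI (filterI (nbhs_right_gt 0) (nbhs_right_lt ltr01)) near_nonincr).
have Sseg := convex_set_segment psi_cvx.1 Sx0 Sx.
apply: (psiC_segment_neq (m_polar j) Sx0 Sx Cc psix0 mjc (s := s)); first lra.
apply: (minty_sol_segment_descent Ccl _ minty); first by apply: Sseg; lra.
move=> t t01; have ts0 : 0 < t * s by rewrite mulr_gt0 //; lra.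
have tss : t * s < s by rewrite gtr_pMl //; lra.
rewrite segment_toward_start; split; first by apply: Sseg; lra.
rewrite Ceq => i; rewrite (dual_elemD (m_dual i)) (dual_elemN (m_dual i)) opprD opprK.
by have := nonincr i (s - t * s); lra.
Qed.

End MintyEfficiency.

Theorem mainTheorem5 (R : realType) (X : lmodType R) (Z : tvsType R)
  (Zhaus : hausdorff_space Z)
  (C : set Z) (Ccl : closed C) (Ccvx : convex_set (C : set (convex_lmodType Z)))
  (Ccone : is_cone C) (C0 : C 0)
  (Cpol_nontriv : exists2 zs, neg_polar C zs & zs <> (fun _ => 0))
  (S : set X) (psi : X -> Z) (psi_cvx : C_convex C S psi)
  (x0 : X) (Sx0 : S x0)
  (Cpoly : polyhedral C)
  (hlsc : forall (x : X) (zs : Z -> R), neg_polar C zs -> zs <> (fun _ => 0) ->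
     lsc_at (fun t : R => if (0 <= t) && (t <= 1)
                          then phi_fz (psiC C S psi) zs (x0 + t *: (x - x0))
                          else +oo%E) 0) :
  minty_sol (psiC C S psi) x0 <-> in_Eff C S psi (psi x0).
Proof.
split; first exact: minty_sol_in_Eff.
exact: in_Eff_minty_sol.
Qed.
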